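(* Let $\boldsymbol\lambda,\boldsymbol\mu\in\Pi^l_m$ and $\lambda,\mu\in\Pi$ with $\boldsymbol\lambda\leftrightarrow\lambda$, $\boldsymbol\mu\leftrightarrow\mu$. If $j_{\boldsymbol\lambda,\boldsymbol\mu}\neq0$ (so that (J1) or (J2) holds, with ribbons $\rho,\rho'$), then $N_i(\rho)=N_i(\rho')$ for all $i\in\mathbb Z$, and $|\lambda|=|\mu|$.
   Context: Fix $n,l,m\ge1$, $\mathbf s_l=(s_1,\dots,s_l)\in\mathbb Z^l$, $s=\sum s_b$. Partitions are identified with Young diagrams; $\Pi^l_m$ = $l$-tuples of partitions of total size $m$, nodes $(i,j,b)$ with content $s_b+j-i$ and $\mathrm{res}_n$ = content mod $n$. For a set of nodes $\theta$, $N_i(\theta)=\#\{\gamma\in\theta:\mathrm{res}_n(\gamma)=i\bmod n\}$. Ribbon: nonempty connected skew diagram with no $2\times2$ square; head = node with $j-i$ minimal; $\mathrm{ht}$ = row of head minus row of tail; length = number of nodes. Each $k\in\mathbb Z$ is uniquely $k=c(k)+n(d(k)-1)+nl\,m(k)$, $c(k)\in\{1..n\}$, $d(k)\in\{1..l\}$; $\phi(k)=c(k)+n\,m(k)$. $\boldsymbol\lambda\leftrightarrow\lambda$ iff $\{(\lambda^{(b)}_i+s_b+1-i,b):i\ge1,1\le b\le l\}=\{(\phi(k),d(k)):k\in\{\lambda_i+s+1-i:i\ge1\}\}$. (J1): $\boldsymbol\lambda\ne\boldsymbol\mu$, there are $d\ne d'$ with $\mu^{(d)}\subset\lambda^{(d)}$,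 $\lambda^{(d')}\subset\mu^{(d')}$, $\lambda^{(b)}=\mu^{(b)}$ otherwise, and $\rho:=\lambda^{(d)}/\mu^{(d)}$ (component $d$), $\rho':=\mu^{(d')}/\lambda^{(d')}$ (component $d'$) ribbons of common length $\hat h$. (J2): $\boldsymbol\lambda\ne\boldsymbol\mu$, there is $d$ with $\lambda^{(b)}=\mu^{(b)}$ for $b\ne d$, $\rho:=\lambda^{(d)}/(\lambda^{(d)}\cap\mu^{(d)})$, $\rho':=\mu^{(d)}/(\lambda^{(d)}\cap\mu^{(d)})$ ribbons of common length $\hat h$. $j_{\boldsymbol\lambda,\boldsymbol\mu}\in\mathbb Z$: in case (J1), $(-1)^{\mathrm{ht}\rho+\mathrm{ht}\rho'}$ if $\mathrm{res}_n(\mathrm{hd}\rho)=\mathrm{res}_n(\mathrm{hd}\rho')$, else $0$; in case (J2), $(-1)^{\mathrm{ht}\rho+\mathrm{ht}\rho'}\varepsilon$ with $\varepsilon=1$ if head residues are equal and $\hat h\not\equiv0\pmod n$, $\varepsilon=-1$ if they differ and $\hat h\equiv0\pmod n$, $\varepsilon=0$ otherwise; in all other cases $0$. *)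

From mathcomp Require Import all_boot all_algebra.
Set Implicit Arguments. Unset Strict Implicit. Unset Printing Implicit Defensive.
Import GRing.Theory Num.Theory.

(* A partition is a weakly decreasing list of positive parts; lambda_i = nth 0 la (i-1). *)
Definition is_partition (la : seq nat) : bool :=
  sorted geq la && all (fun x => 0 < x) la.

(* node (i,j), i = row >= 1, j = column >= 1 *)
Definition in_diag (la : seq nat) (x : nat * nat) : bool :=
  [&& 0 < x.1, 0 < x.2 & x.2 <= nth 0 la x.1.-1].

Definition nodes (la : seq nat) : seq (nat * nat) :=
  flatten [seq [seq (i, j) | j <- iota 1 (nth 0 la i.-1)] | i <- iota 1 (size la)].

Definition skewd (la mu : seq nat) : seq (nat * nat) :=
  [seq x <- nodes la | ~~ in_diag mu x].

Definition subdiag (mu la : seq nat) : bool := all (in_diag la) (nodes mu).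

Definition adj (x y : nat * nat) : bool :=
  ((x.1 == y.1) && ((x.2 == y.2.+1) || (y.2 == x.2.+1))) ||
  ((x.2 == y.2) && ((x.1 == y.1.+1) || (y.1 == x.1.+1))).

Definition connected_nodes (S : seq (nat * nat)) : Prop :=
  forall x y, x \in S -> y \in S ->
    exists p : seq (nat * nat),
      [/\ path adj x p, all (fun z => z \in S) p & last x p = y].

Definition no_square (S : seq (nat * nat)) : Prop :=
  ~ exists i j, all (fun z => z \in S) [:: (i, j); (i.+1, j); (i, j.+1); (i.+1, j.+1)].

Definition is_ribbon (S : seq (nat * nat)) : Prop :=
  [/\ S <> [::], connected_nodes S & no_square S].

Definition dg (x : nat * nat) : int := (x.2%:Z - x.1%:Z)%R.

Definition rhead (S : seq (nat * nat)) : nat * nat :=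
  foldr (fun x h => if (dg x <= dg h)%R then x else h) (nth (0, 0) S 0) S.
Definition rtail (S : seq (nat * nat)) : nat * nat :=
  foldr (fun x h => if (dg h <= dg x)%R then x else h) (nth (0, 0) S 0) S.

Definition ht (S : seq (nat * nat)) : nat := (rhead S).1 - (rtail S).1.

Definition content (sb : int) (x : nat * nat) : int := (sb + x.2%:Z - x.1%:Z)%R.
Definition res (n : nat) (sb : int) (x : nat * nat) : int := ((content sb x) %% n%:Z)%Z.
Definition Ncount (n : nat) (sb : int) (i : int) (th : seq (nat * nat)) : nat :=
  count (fun g => res n sb g == (i %% n%:Z)%Z) th.

(* k = c(k) + n(d(k)-1) + nl m(k), c in 1..n, d in 1..l *)
Definition cfun (n l : nat) (k : int) : int :=
  (((((k - 1)%R %% (n * l)%:Z)%Z %% n%:Z)%Z) + 1)%R.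
Definition dfun (n l : nat) (k : int) : int :=
  (((((k - 1)%R %% (n * l)%:Z)%Z %/ n%:Z)%Z) + 1)%R.
Definition mfun (n l : nat) (k : int) : int := ((k - 1)%R %/ (n * l)%:Z)%Z.
Definition phi (n l : nat) (k : int) : int := (cfun n l k + n%:Z * mfun n l k)%R.

Definition charge (l : nat) (s : 'I_l -> int) : int := (\sum_(b < l) s b)%R.

Definition corresp (n l : nat) (s : 'I_l -> int) (bla : 'I_l -> seq nat) (la : seq nat)
  : Prop :=
  forall (x : int) (b : 'I_l),
    (exists i : nat, 0 < i /\ x = ((nth 0 (bla b) i.-1)%:Z + s b + 1 - i%:Z)%R) <->
    (exists k : int,
       (exists i : nat, 0 < i /\ k = ((nth 0 la i.-1)%:Z + charge s + 1 - i%:Z)%R) /\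
       phi n l k = x /\ dfun n l k = ((val b).+1)%:Z%R).

Definition is_multipartition (l m : nat) (bla : 'I_l -> seq nat) : Prop :=
  (forall b, is_partition (bla b)) /\ \sum_(b < l) sumn (bla b) = m.

Definition J1 (l : nat) (bla bmu : 'I_l -> seq nat) (d d' : 'I_l) : Prop :=
  [/\ bla <> bmu /\ d <> d',
      subdiag (bmu d) (bla d) /\ subdiag (bla d') (bmu d'),
      (forall b, b <> d -> b <> d' -> bla b = bmu b),
      is_ribbon (skewd (bla d) (bmu d)) /\ is_ribbon (skewd (bmu d') (bla d')) &
      size (skewd (bla d) (bmu d)) = size (skewd (bmu d') (bla d'))].

Definition J2 (l : nat) (bla bmu : 'I_l -> seq nat) (d : 'I_l) : Prop :=
  [/\ bla <> bmu, (forall b, b <> d -> bla b = bmu b),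
      is_ribbon (skewd (bla d) (bmu d)), is_ribbon (skewd (bmu d) (bla d)) &
      size (skewd (bla d) (bmu d)) = size (skewd (bmu d) (bla d))].

Definition jJ1 (n l : nat) (s : 'I_l -> int) (bla bmu : 'I_l -> seq nat) (d d' : 'I_l)
  : int :=
  let rho := skewd (bla d) (bmu d) in
  let rho' := skewd (bmu d') (bla d') in
  if res n (s d) (rhead rho) == res n (s d') (rhead rho')
  then ((-1) ^+ (ht rho + ht rho'))%R else 0%R.

Definition jJ2 (n l : nat) (s : 'I_l -> int) (bla bmu : 'I_l -> seq nat) (d : 'I_l)
  : int :=
  let rho := skewd (bla d) (bmu d) in
  let rho' := skewd (bmu d) (bla d) in
  let hh := size rho in
  let eqr := res n (s d) (rhead rho) == res n (s d) (rhead rho') in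
  let eps : int :=
    if eqr && ~~ (n %| hh) then 1%R
    else if ~~ eqr && (n %| hh) then (-1)%R else 0%R in
  ((-1) ^+ (ht rho + ht rho') * eps)%R.

(* Two facts do the work.  The contents of a ribbon are consecutive integers starting
   at the content of its head (no 2x2 square makes content injective, connectedness
   leaves no gaps), so the residue counts of a ribbon depend only on its length and
   head residue, and not even on the latter when n divides the length; j <> 0 puts
   us in one of these two cases.  For |lambda| = |mu|, the map k |-> (d(k), phi(k))
   matches the beta-numbers of lambda with those of the components of the
   multipartition.  Summing k over beta-numbers and telescoping runner by runner
   expresses |lambda| as a constant plus the sum over components b of the weighted
   sizes of lambda^(b), a node of content t weighing 1 + [n | t] (n l - n).  So
   |lambda| - |mu| is a sum of weighted sizes of the ribbons, i.e. of their lengths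
   plus (n l - n) N_0, and these agree for rho and rho'. *)

From mathcomp Require Import all_boot all_order all_algebra zify.
Import Order.TTheory GRing.Theory Num.Theory.
Set Implicit Arguments. Unset Strict Implicit. Unset Printing Implicit Defensive.
Local Open Scope ring_scope.

Lemma modz_range (x d : int) : 0 < d -> 0 <= (x %% d)%Z < d.
Proof. by move=> d0; rewrite modz_ge0 ?gt_eqF ?ltz_pmod. Qed.

Lemma edivz_unique (x q r d : int) : 0 < d -> 0 <= r < d -> x = q * d + r ->
  (x %/ d)%Z = q /\ (x %% d)%Z = r.
Proof.
move=> d0 hr ->; rewrite modzMDl modz_small // divzMDl ?gt_eqF //.
by rewrite divz_small ?addr0 // abszE gtr0_norm.
Qed.

(* The k with [phi k = x] and [dfun k = b.+1]: write x - 1 = n q + a with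
   0 <= a < n and take k - 1 = a + n b + n l q. *)
Definition phi_inv (n l b : nat) (x : int) : int :=
  ((x - 1) %% n%:Z)%Z + 1 + (n * b)%:Z + (n * l)%:Z * ((x - 1) %/ n%:Z)%Z.

Section PhiInverse.
Variables (n l : nat) (n_gt0 : (0 < n)%N) (l_gt0 : (0 < l)%N).

Let modn_range x : 0 <= (x %% n%:Z)%Z < n%:Z.
Proof. by apply: modz_range; lia. Qed.

Let modnl_range x : 0 <= (x %% (n * l)%:Z)%Z < (n * l)%:Z.
Proof. by apply: modz_range; lia. Qed.

Lemma dfun_range k : 1 <= dfun n l k <= l%:Z.
Proof.
rewrite /dfun; set r := ((k - 1) %% _)%Z.
have := modnl_range (k - 1); rewrite -/r => hr.
have := divz_eq r n%:Z; have := modn_range r; nia.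
Qed.

Lemma phi_invK k : phi_inv n l `|dfun n l k - 1|%N (phi n l k) = k.
Proof.
have := dfun_range k; rewrite /phi_inv /phi /cfun /mfun /dfun.
set r := ((k - 1) %% (n * l)%:Z)%Z; set q := ((k - 1) %/ (n * l)%:Z)%Z.
have e0 := divz_eq (k - 1) (n * l)%:Z; have hr := modnl_range (k - 1).
rewrite -/r -/q in e0 hr.
set e := (r %/ n%:Z)%Z; set a := (r %% n%:Z)%Z.
have e1 := divz_eq r n%:Z; have ha := modn_range r; rewrite -/e -/a in e1 ha.
move=> he; rewrite !PoszM.
have -> : Posz (absz (e + 1 - 1)%R) = e by lia.
have [-> ->] : ((a + 1 + n%:Z * q - 1) %/ n%:Z)%Z = q /\
               ((a + 1 + n%:Z * q - 1) %% n%:Z)%Z = a by apply: edivz_unique; lia.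
nia.
Qed.

Lemma phi_inv_spec b x : (b < l)%N ->
  phi n l (phi_inv n l b x) = x /\ dfun n l (phi_inv n l b x) = b.+1%:Z.
Proof.
move=> hb; rewrite /phi_inv /phi /cfun /mfun /dfun.
have e1 := divz_eq (x - 1) n%:Z; have ha := modn_range (x - 1).
set a := ((x - 1) %% n%:Z)%Z in e1 ha *; set q := ((x - 1) %/ n%:Z)%Z in e1 ha *.
have [-> ->] : ((a + 1 + (n * b)%:Z + (n * l)%:Z * q - 1) %/ (n * l)%:Z)%Z = q /\
               ((a + 1 + (n * b)%:Z + (n * l)%:Z * q - 1) %% (n * l)%:Z)%Z = a + (n * b)%:Z.
  by apply: edivz_unique; rewrite ?PoszM; nia.
have [-> ->] : ((a + (n * b)%:Z) %/ n%:Z)%Z = b%:Z /\ ((a + (n * b)%:Z) %% n%:Z)%Z = a.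
  by apply: edivz_unique; rewrite ?PoszM; lia.
split; lia.
Qed.

Lemma phi_inv_inj b b' x x' : (b < l)%N -> (b' < l)%N ->
  phi_inv n l b x = phi_inv n l b' x' -> b = b' /\ x = x'.
Proof.
move=> hb hb' e; have [p1 d1] := phi_inv_spec x hb; have [p2 d2] := phi_inv_spec x' hb'.
rewrite e in p1 d1; split; last by rewrite -p1 p2.
by move: d1; rewrite d2; lia.
Qed.

Lemma phi_inv_ge b x (T : nat) : (b < l)%N ->
  (1 - (n * l * T)%:Z <= phi_inv n l b x) = (1 - (n * T)%:Z <= x).
Proof.
move=> hb; rewrite /phi_inv !PoszM.
have e1 := divz_eq (x - 1) n%:Z; have ha := modn_range (x - 1).
set a := ((x - 1) %% n%:Z)%Z in e1 ha *; set q := ((x - 1) %/ n%:Z)%Z in e1 ha *.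
have -> : x = 1 + n%:Z * q + a by lia.
have hab : 0 <= a + n%:Z * b%:Z < n%:Z * l%:Z by nia.
case: (lerP 0 (q + T%:Z)) => hq; first by apply/idP/idP => _; nia.
have : n%:Z * (q + T%:Z + 1) <= 0 by rewrite pmulr_rle0; lia.
have : n%:Z * l%:Z * (q + T%:Z + 1) <= 0 by rewrite pmulr_rle0; lia.
by move=> h1 h2; apply/idP/idP => h; nia.
Qed.

End PhiInverse.

(* The first [N] beta-numbers [la_(i+1) + c - i] of [la] with charge [c]; the row
   index is shifted by one with respect to [corresp]. *)
Definition beta (c : int) (la : seq nat) (N : nat) : seq int :=
  [seq (nth 0%N la i)%:Z + c - i%:Z | i <- iota 0 N].

Lemma partition_nth_mono la i j : is_partition la -> (i <= j)%N ->
  (nth 0%N la j <= nth 0%N la i)%N.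
Proof.
case/andP=> sorted_la _ hij; case: (ltnP j (size la)) => hj; last by rewrite nth_default.
have geq_trans : transitive geq by move=> a b c h1 h2; apply: leq_trans h2 h1.
by apply: (sorted_leq_nth geq_trans leqnn) => //; rewrite inE /=; lia.
Qed.

Lemma beta_uniq c la N : is_partition la -> uniq (beta c la N).
Proof.
move=> hla; rewrite map_inj_in_uniq ?iota_uniq // => i j _ _ e.
by case: (ltngtP i j) => // h; have := partition_nth_mono hla (ltnW h); lia.
Qed.

Lemma mem_beta c la N x : (size la <= N)%N ->
  x \in beta c la N <->
  (exists i : nat, x = (nth 0%N la i)%:Z + c - i%:Z) /\ c - N%:Z + 1 <= x.
Proof.
move=> hs; split.
  by case/mapP=> i; rewrite mem_iota => /andP[_ hi] ->; split; [exists i | lia].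
case=> -[i ->] hx; apply/mapP; exists i => //; rewrite mem_iota /=.
case: (ltnP i N) => // hi; move: hx; rewrite nth_default; [lia | exact: leq_trans hs hi].
Qed.

Lemma exists_row_shift (f : nat -> nat) (c x : int) :
  (exists i : nat, (0 < i)%N /\ x = (f i.-1)%:Z + c + 1 - i%:Z) <->
  (exists i : nat, x = (f i)%:Z + c - i%:Z).
Proof.
split; first by case=> -[|i] [//= _ ->]; exists i; lia.
by case=> i ->; exists i.+1; split => //=; lia.
Qed.

Lemma mem_nodes la x : (x \in nodes la) = in_diag la x.
Proof.
case: x => a b; rewrite /in_diag /=; apply/flatten_mapP/idP.
  case=> i; rewrite mem_iota => /andP[h1 h2] /mapP[j].
  by rewrite mem_iota => /andP[h3 h4] [-> ->]; apply/and3P; split => //; lia.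
case/and3P=> ha hb hab; exists a.
  rewrite mem_iota ha /=; case: (ltnP a.-1 (size la)) => h; first by lia.
  by move: hab; rewrite nth_default //; lia.
by apply/mapP; exists b => //; rewrite mem_iota hb /=; lia.
Qed.

Lemma nodes_uniq la : uniq (nodes la).
Proof.
apply: allpairs_uniq_dep => [||[i1 j1] [i2 j2] _ _ /= [-> ->] //]; first exact: iota_uniq.
by move=> i _; apply: iota_uniq.
Qed.

Lemma mem_skewd la mu x : (x \in skewd la mu) = in_diag la x && ~~ in_diag mu x.
Proof. by rewrite mem_filter mem_nodes andbC. Qed.

Lemma skewd_nil la mu : subdiag la mu -> skewd la mu = [::].
Proof.
by move=> sub; rewrite /skewd (eq_in_filter (a2 := pred0)) ?filter_pred0 // => x /(allP sub) ->.
Qed.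

Section Telescope.
Variables (G w : int -> int).
Hypothesis G_step : forall t, G (t + 1) - G t = w t.

Lemma telescope_int v k : G (v + k%:Z) = G v + \sum_(j <- iota 0 k) w (v + j%:Z).
Proof.
have := @telescope_sumr_eq _ 0 k (fun j => G (v + j%:Z)) (fun j => w (v + j%:Z)) (leq0n k).
rewrite /index_iota subn0 addr0 => -> => [|j _]; first by lia.
by rewrite -G_step -addn1 PoszD addrA.
Qed.

Lemma sum_beta_telescope c la N : (size la <= N)%N ->
  \sum_(x <- beta c la N) G x =
  \sum_(i <- iota 0 N) G (c - i%:Z) + \sum_(g <- nodes la) w (content c g).
Proof.
move=> hs; rewrite /beta big_map /nodes big_flatten big_map.
have -> : \sum_(i <- iota 0 N) G ((nth 0%N la i)%:Z + c - i%:Z) =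
    \sum_(i <- iota 0 N)
      (G (c - i%:Z) + \sum_(j <- iota 0 (nth 0%N la i)) w (c - i%:Z + j%:Z)).
  by apply: eq_bigr => i _; rewrite -telescope_int; congr G; lia.
rewrite big_split /=; congr (_ + _).
rewrite -[1%N]/(1 + 0)%N iotaDl big_map -(subnKC hs) iotaD big_cat /=.
rewrite [X in _ + X]big1_seq ?addr0 => [|i]; last first.
  by rewrite mem_iota => /and3P[_ hi _]; rewrite nth_default ?big_nil.
apply: eq_bigr => i _; rewrite big_map -[1%N]/(1 + 0)%N iotaDl big_map.
by apply: eq_bigr => j _; rewrite /content /=; congr w; lia.
Qed.

End Telescope.

Lemma sumn_nth_iota la N : (size la <= N)%N ->
  (sumn la)%:Z = \sum_(i <- iota 0 N) (nth 0%N la i)%:Z.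
Proof.
elim: la N => [|a la IH] [|N] //= hs; rewrite ?big_cons ?big_nil //.
- by rewrite big1_seq // => i _; rewrite nth_nil.
- by rewrite -[1%N]/(1 + 0)%N iotaDl big_map PoszD (IH N).
Qed.

Lemma sum_beta c la N : (size la <= N)%N ->
  \sum_(x <- beta c la N) x = (sumn la)%:Z + \sum_(i <- iota 0 N) (c - i%:Z).
Proof.
move=> hs; rewrite /beta big_map (sumn_nth_iota hs) -big_split /=.
by apply: eq_bigr => i _; lia.
Qed.

Definition node_weight (n l : nat) (t : int) : int :=
  if (n%:Z %| t)%Z then 1 - n%:Z + (n * l)%:Z else 1.

Definition wsize (n l : nat) (c : int) (S : seq (nat * nat)) : int :=
  \sum_(g <- S) node_weight n l (content c g).

Lemma phi_invE n l b x : phi_inv n l b x = (n * b)%:Z + phi_inv n l 0 x.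
Proof. by rewrite /phi_inv muln0 addr0; lia. Qed.

(* [phi_inv n l 0] is a discrete antiderivative of [node_weight]: it jumps by
   [n l - n + 1] exactly when crossing a multiple of [n]. *)
Lemma phi_inv0_step n l t : (0 < n)%N ->
  phi_inv n l 0 (t + 1) - phi_inv n l 0 t = node_weight n l t.
Proof.
move=> n_gt0; rewrite /phi_inv /node_weight addrK.
have e1 := divz_eq t n%:Z; have ha := @modz_range t n%:Z ltac:(lia).
set a := (t %% n%:Z)%Z in e1 ha *; set q := (t %/ n%:Z)%Z in e1 ha *.
have -> : (n%:Z %| t)%Z = (a == 0) by apply/dvdz_mod0P/eqP.
case: eqP => ha0.
  have [-> ->] : ((t - 1) %/ n%:Z)%Z = q - 1 /\ ((t - 1) %% n%:Z)%Z = n%:Z - 1.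
    by apply: edivz_unique; lia.
  by rewrite PoszM; lia.
have [-> ->] : ((t - 1) %/ n%:Z)%Z = q /\ ((t - 1) %% n%:Z)%Z = a - 1.
  by apply: edivz_unique; lia.
lia.
Qed.

(* Truncating at [1 - n l T] on the [la] side corresponds to truncating at
   [1 - n T] on every runner, which is why the lengths [N] and [Nb b] are tied
   to [T]. *)
Section BetaDecomposition.
Variables (n l : nat) (n_gt0 : (0 < n)%N) (l_gt0 : (0 < l)%N).
Variables (s : 'I_l -> int) (bla : 'I_l -> seq nat) (la : seq nat).
Variables (T N : nat) (Nb : 'I_l -> nat).
Hypothesis bla_la : corresp n s bla la.
Hypothesis la_part : is_partition la.
Hypothesis bla_part : forall b, is_partition (bla b).
Hypothesis N_def : N%:Z = charge s + (n * l * T)%:Z.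
Hypothesis Nb_def : forall b, (Nb b)%:Z = s b + (n * T)%:Z.
Hypothesis size_la : (size la <= N)%N.
Hypothesis size_bla : forall b, (size (bla b) <= Nb b)%N.

Lemma beta_decomposition : perm_eq (beta (charge s) la N)
  [seq phi_inv n l b x | b : 'I_l <- enum 'I_l, x <- beta (s b) (bla b) (Nb b)].
Proof.
apply: uniq_perm; first exact: beta_uniq.
  apply: allpairs_uniq_dep => [||[b1 x1] [b2 x2] _ _ /= e]; first exact: enum_uniq.
    by move=> b _; apply: beta_uniq.
  by have [/val_inj -> ->] := phi_inv_inj n_gt0 l_gt0 (ltn_ord b1) (ltn_ord b2) e.
move=> k; apply/idP/idP.
- case/(mem_beta _ _ size_la) => hk hk_ge.
  have hd := dfun_range n_gt0 l_gt0 k.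
  have hb : (`|dfun n l k - 1|%N < l)%N by lia.
  pose b := Ordinal hb.
  have hx : exists i : nat, phi n l k = (nth 0%N (bla b) i)%:Z + s b - i%:Z.
    apply/exists_row_shift/(bla_la (phi n l k) b); exists k.
    by split; [apply/exists_row_shift | split => //=; lia].
  apply/allpairsPdep; exists b, (phi n l k); rewrite mem_enum phi_invK //.
  split=> //; apply/mem_beta => //; split => //.
  have : 1 - (n * l * T)%:Z <= phi_inv n l b (phi n l k).
    by rewrite phi_invK //; move: hk_ge; rewrite N_def; lia.
  by rewrite phi_inv_ge // Nb_def; lia.
- case/allpairsPdep => b [x [_ /(mem_beta _ _ (size_bla b)) [hx hx_ge] ->]].
  have [k' [hk' [phik dk]]] := iffLR (bla_la x b) (iffRL (exists_row_shift _ _ _) hx).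
  have ek : phi_inv n l b x = k'.
    by rewrite -(phi_invK n_gt0 l_gt0 k') phik dk /=; congr (phi_inv _ _ _ _); lia.
  apply/mem_beta => //; split; first by rewrite ek; exact/exists_row_shift/hk'.
  have : 1 - (n * l * T)%:Z <= phi_inv n l b x.
    by rewrite phi_inv_ge ?ltn_ord //; move: hx_ge; rewrite Nb_def; lia.
  by rewrite N_def; lia.
Qed.

Lemma sumn_decomposition :
  (sumn la)%:Z + \sum_(i <- iota 0 N) (charge s - i%:Z) =
  \sum_(b < l) (\sum_(i <- iota 0 (Nb b)) ((n * b)%:Z + phi_inv n l 0 (s b - i%:Z))
                + wsize n l (s b) (nodes (bla b))).
Proof.
rewrite -sum_beta // (perm_big _ beta_decomposition) big_allpairs_dep -big_enum /=.
apply: eq_bigr => b _; under eq_bigr do rewrite phi_invE.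
rewrite big_split /= (sum_beta_telescope (phi_inv0_step l ^~ n_gt0)) //.
by rewrite [in RHS]big_split /= /beta big_map /wsize addrA.
Qed.

End BetaDecomposition.

Lemma wsize_nodesB n l c la mu :
  wsize n l c (nodes la) - wsize n l c (nodes mu) =
  wsize n l c (skewd la mu) - wsize n l c (skewd mu la).
Proof.
rewrite /wsize /skewd.
rewrite -(perm_big _ (permEl (perm_filterC (in_diag mu) (nodes la)))) big_cat /=.
rewrite -(perm_big _ (permEl (perm_filterC (in_diag la) (nodes mu)))) big_cat /=.
have -> : \sum_(g <- [seq x <- nodes mu | in_diag la x]) node_weight n l (content c g) =
          \sum_(g <- [seq x <- nodes la | in_diag mu x]) node_weight n l (content c g).
  apply/perm_big/uniq_perm; rewrite ?filter_uniq ?nodes_uniq // => x.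
  by rewrite !mem_filter !mem_nodes andbC.
by rewrite opprD addrACA subrr add0r.
Qed.

Lemma sumn_diff_wsize n l (s : 'I_l -> int) (bla bmu : 'I_l -> seq nat) la mu :
  (0 < n)%N -> (0 < l)%N ->
  corresp n s bla la -> corresp n s bmu mu -> is_partition la -> is_partition mu ->
  (forall b, is_partition (bla b)) -> (forall b, is_partition (bmu b)) ->
  (sumn la)%:Z - (sumn mu)%:Z =
  \sum_(b < l) (wsize n l (s b) (skewd (bla b) (bmu b)) -
                wsize n l (s b) (skewd (bmu b) (bla b))).
Proof.
move=> n_gt0 l_gt0 bla_la bmu_mu la_part mu_part bla_part bmu_part.
pose Tb b := (`|s b|%N + size (bla b) + size (bmu b))%N.
pose T := (size la + size mu + `|charge s|%N + \sum_(b < l) Tb b)%N.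
have Tb_le b : (Tb b <= T)%N by rewrite /T (bigD1 b) //=; lia.
have T_le : (T <= n * T)%N /\ (T <= n * l * T)%N.
  by split; apply: leq_pmull; rewrite ?muln_gt0 ?n_gt0 ?l_gt0.
have T_ge : (size la + size mu + `|charge s|%N <= T)%N by rewrite /T; lia.
pose N := absz (charge s + (n * l * T)%:Z)%R.
pose Nb b := absz (s b + (n * T)%:Z)%R.
have N_def : N%:Z = charge s + (n * l * T)%:Z by rewrite /N; lia.
have Nb_def b : (Nb b)%:Z = s b + (n * T)%:Z by have := Tb_le b; rewrite /Nb /Tb; lia.
have size_le b : (size (bla b) <= Nb b)%N /\ (size (bmu b) <= Nb b)%N.
  by have := Tb_le b; rewrite /Nb /Tb; lia.
have size_la : (size la <= N)%N by rewrite /N; lia.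
have size_mu : (size mu <= N)%N by rewrite /N; lia.
have := sumn_decomposition n_gt0 l_gt0 bla_la la_part bla_part N_def Nb_def size_la
  (fun b => (size_le b).1).
have := sumn_decomposition n_gt0 l_gt0 bmu_mu mu_part bmu_part N_def Nb_def size_mu
  (fun b => (size_le b).2).
move=> /(canRL (addrK _)) -> /(canRL (addrK _)) ->.
rewrite opprB addrA subrK -sumrB; apply: eq_bigr => b _.
by rewrite opprD addrACA subrr add0r wsize_nodesB.
Qed.

Lemma wsize_Ncount n l c S :
  wsize n l c S = (size S)%:Z + (Ncount n c 0 S)%:Z * ((n * l)%:Z - n%:Z).
Proof.
rewrite /wsize /Ncount /res mod0z; elim: S => [|g S IH]; first by rewrite big_nil mul0r.
rewrite big_cons IH /= /node_weight.
have -> : ((content c g %% n%:Z)%Z == 0) = (n%:Z %| content c g)%Z.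
  by apply/eqP/dvdz_mod0P.
by case: (n%:Z %| content c g)%Z => /=; lia.
Qed.

Definition count_res (n h : nat) (r c : int) : nat :=
  count (fun t : nat => ((c + t%:Z) %% n%:Z)%Z == r) (iota 0 h).

Lemma count_res_modz n h r c c' : (c %% n%:Z)%Z = (c' %% n%:Z)%Z ->
  count_res n h r c = count_res n h r c'.
Proof. by move=> e; apply: eq_count => t /=; rewrite -modzDml e modzDml. Qed.

(* Shifting the window by one trades [t = 0] for [t = h], and [c + h = c] mod [n]. *)
Lemma count_res_addz1 n h r c : (n %| h)%N -> count_res n h r (c + 1) = count_res n h r c.
Proof.
move=> n_dvd_h; rewrite /count_res.
have -> : count (fun t : nat => ((c + 1 + t%:Z) %% n%:Z)%Z == r) (iota 0 h) =
          count (fun t : nat => ((c + t%:Z) %% n%:Z)%Z == r) (iota 1 h).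
  by rewrite -[1%N]/(1 + 0)%N iotaDl count_map; apply: eq_count => t /=; rewrite PoszD addrA.
have := congr1 (count (fun t : nat => ((c + t%:Z) %% n%:Z)%Z == r)) (iotaD 0 h 1).
rewrite addn1 /= !count_cat /= add0n.
have -> : ((c + h%:Z) %% n%:Z)%Z = ((c + 0%:Z) %% n%:Z)%Z.
  by rewrite -(divnK n_dvd_h) PoszM addr0 addrC modzMDl.
by rewrite addn0 addnC => /addIn.
Qed.

Lemma count_res_dvd n h r c c' : (n %| h)%N -> count_res n h r c = count_res n h r c'.
Proof.
move=> n_dvd_h; wlog le_cc' : c c' / c <= c'.
  by move=> hw; case: (lerP c c') => [|/ltW] /hw.
rewrite -[c'](subrK c) -[c' - c]gez0_abs ?subr_ge0 //.
elim: `|c' - c|%N => [|k IH]; first by rewrite add0r.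
by rewrite -addn1 PoszD addrAC count_res_addz1.
Qed.

Lemma rhead_spec (S : seq (nat * nat)) z :
  let h := foldr (fun x h => if dg x <= dg h then x else h) z S in
  (h = z \/ h \in S) /\ (forall y, y \in S -> dg h <= dg y).
Proof.
elim: S => [|x S [IH1 IH2]] /=; first by split; [left|].
case: ifP => hx; split.
- by right; rewrite inE eqxx.
- by move=> y; rewrite inE => /orP[/eqP -> //|/IH2]; apply: le_trans.
- by case: IH1 => [->|hin]; [left|right; rewrite inE hin orbT].
- move=> y; rewrite inE => /orP[/eqP ->|/IH2 //].
  by move/negbT: hx; rewrite -ltNge => /ltW.
Qed.

Lemma rhead_min S : S <> [::] ->
  rhead S \in S /\ forall y, y \in S -> dg (rhead S) <= dg y.
Proof.
move=> hS; have [[h_eq|//] hmin] := rhead_spec S (nth (0, 0)%N S 0); split => //.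
by rewrite /rhead h_eq mem_nth //; case: S hS {h_eq hmin}.
Qed.

Lemma adj_dg x y : adj x y -> dg y = dg x + 1 \/ dg y = dg x - 1.
Proof.
case: x y => [a b] [c d]; rewrite /adj /dg /=.
by case/orP => /andP[/eqP e /orP[/eqP h|/eqP h]]; subst => /=; lia.
Qed.

Lemma path_adj_dg_ivt (S : seq (nat * nat)) x p :
  path adj x p -> all (mem S) p -> x \in S ->
  forall v, dg x <= v <= dg (last x p) -> exists2 z, z \in S & dg z = v.
Proof.
elim: p x => [|y p IH] x /=; first by move=> _ _ hx v hv; exists x => //; lia.
move=> /andP[hxy hp] /andP[hy hall] hx v /andP[h1 h2].
case: (eqVneq v (dg x)) => [->|hne]; first by exists x.
by apply: (IH y) => //; have := adj_dg hxy; lia.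
Qed.

Lemma in_diag_le la x y : is_partition la -> in_diag la y ->
  (0 < x.1)%N -> (0 < x.2)%N -> (x.1 <= y.1)%N -> (x.2 <= y.2)%N -> in_diag la x.
Proof.
move=> hla /and3P[h1 h2 h3] hx1 hx2 l1 l2; apply/and3P; split => //.
by have := partition_nth_mono (i := x.1.-1) (j := y.1.-1) hla ltac:(lia); lia.
Qed.

Lemma skewd_convex la mu (x y z : nat * nat) : is_partition la -> is_partition mu ->
  x \in skewd la mu -> z \in skewd la mu ->
  (x.1 <= y.1 <= z.1)%N -> (x.2 <= y.2 <= z.2)%N -> y \in skewd la mu.
Proof.
move=> hla hmu; rewrite !mem_skewd => /andP[hx_la hx_mu] /andP[hz_la _].
move=> /andP[x1y1 y1z1] /andP[x2y2 y2z2].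
have [y1_gt0 y2_gt0] : (0 < y.1)%N /\ (0 < y.2)%N by case/and3P: hx_la; lia.
rewrite (in_diag_le hla hz_la) //=; apply: contra hx_mu => hy_mu.
by case/and3P: hx_la => hx1 hx2 _; apply: (in_diag_le hmu hy_mu).
Qed.

(* Two nodes of a skew diagram on the same diagonal span a 2x2 square. *)
Lemma skewd_dg_inj la mu : is_partition la -> is_partition mu ->
  no_square (skewd la mu) -> {in skewd la mu &, injective dg}.
Proof.
move=> hla hmu hns.
have diag_square x y : x \in skewd la mu -> y \in skewd la mu ->
    (x.1 < y.1)%N -> dg x = dg y -> False.
  case: x y => a b [c d] /= hx hy lt e; apply: hns; exists a, b.
  have lt2 : (b < d)%N by move: e; rewrite /dg /=; lia.
  by rewrite /= hx !(skewd_convex hla hmu hx hy) //=; lia.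
move=> x y hx hy e; case: (ltngtP x.1 y.1) => h.
- by case: (diag_square x y).
- by case: (diag_square y x).
- by case: x y e h {hx hy} => [a b] [c d]; rewrite /dg /= => e h; subst; congr pair; lia.
Qed.

Lemma uniq_interval_perm (V : seq int) (a : int) : uniq V ->
  (forall v : int, v \in V -> a <= v) ->
  (forall v y : int, y \in V -> a <= v <= y -> v \in V) ->
  perm_eq V [seq a + t%:Z | t <- iota 0 (size V)].
Proof.
move=> uV V_ge V_closed.
have u_iv k : uniq [seq a + t%:Z | t <- iota 0 k].
  by rewrite map_inj_uniq ?iota_uniq // => t1 t2; lia.
have mem_iv k (v : int) : a <= v < a + k%:Z -> v \in [seq a + t%:Z | t <- iota 0 k].
  by move=> hv; apply/mapP; exists `|v - a|%N; rewrite ?mem_iota; lia.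
apply: uniq_perm => // v; apply/idP/idP => [hv|/mapP[t]].
- apply: mem_iv; rewrite V_ge //=; case: (ltP v (a + (size V)%:Z)) => // hlarge.
  have : (size [seq (a + t%:Z)%R | t <- iota 0 (size V).+1] <= size V)%N.
    apply: uniq_leq_size => // w /mapP[t]; rewrite mem_iota => /andP[_ ht] ->.
    by apply: (V_closed _ v) => //; lia.
  by rewrite size_map size_iota ltnn.
- rewrite mem_iota => /andP[_ ht] ->; apply/negPn/negP => hnot.
  have : (size V <= size [seq (a + u%:Z)%R | u <- iota 0 t])%N.
    apply: uniq_leq_size => // w hw; apply: mem_iv; rewrite V_ge //=.
    case: (ltP w (a + t%:Z)) => // hw_large; case/negP: hnot.
    by apply: (V_closed _ w) => //; lia.
  by rewrite size_map size_iota; lia.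
Qed.

Lemma ribbon_dg_perm la mu : is_partition la -> is_partition mu ->
  is_ribbon (skewd la mu) ->
  perm_eq (map dg (skewd la mu))
          [seq dg (rhead (skewd la mu)) + t%:Z | t <- iota 0 (size (skewd la mu))].
Proof.
move=> hla hmu [hne hcon hns]; set S := skewd la mu in hne hcon hns *.
have [hd_in hd_min] := rhead_min hne.
rewrite -(size_map dg); apply: uniq_interval_perm.
- by rewrite map_inj_in_uniq ?filter_uniq ?nodes_uniq //; apply: skewd_dg_inj.
- by move=> _ /mapP[y hy ->]; apply: hd_min.
- move=> v _ /mapP[y hy ->] hv; have [p [hp hall hlast]] := hcon _ _ hd_in hy.
  have [z hz <-] := path_adj_dg_ivt hp hall hd_in (v := v) ltac:(by rewrite hlast).
  exact: map_f.
Qed.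

Lemma content_dg c g : content c g = c + dg g.
Proof. by rewrite /content /dg addrA. Qed.

Lemma Ncount_ribbon n c r la mu : is_partition la -> is_partition mu ->
  is_ribbon (skewd la mu) ->
  Ncount n c r (skewd la mu) =
  count_res n (size (skewd la mu)) (r %% n%:Z)%Z (c + dg (rhead (skewd la mu))).
Proof.
move=> hla hmu hrib; rewrite /Ncount /res.
under eq_count do rewrite content_dg.
rewrite -(count_map dg (fun v => ((c + v) %% n%:Z)%Z == (r %% n%:Z)%Z)).
by rewrite (permP (ribbon_dg_perm hla hmu hrib)) count_map; apply: eq_count => t /=; rewrite addrA.
Qed.

Lemma Ncount_ribbon_eq n c c' la mu la' mu' :
  is_partition la -> is_partition mu -> is_partition la' -> is_partition mu' ->
  is_ribbon (skewd la mu) -> is_ribbon (skewd la' mu') ->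
  size (skewd la mu) = size (skewd la' mu') ->
  res n c (rhead (skewd la mu)) = res n c' (rhead (skewd la' mu')) \/
    (n %| size (skewd la mu))%N ->
  forall r, Ncount n c r (skewd la mu) = Ncount n c' r (skewd la' mu').
Proof.
move=> hla hmu hla' hmu' rib rib' hsize hhead r.
rewrite !Ncount_ribbon // -hsize.
case: hhead => [|dvd]; last exact: count_res_dvd.
by rewrite /res !content_dg; apply: count_res_modz.
Qed.

Section JNonzero.
Variables (n l : nat) (n_gt0 : (0 < n)%N) (l_gt0 : (0 < l)%N) (s : 'I_l -> int).
Variables (bla bmu : 'I_l -> seq nat) (la mu : seq nat).
Hypotheses (bla_part : forall b, is_partition (bla b)) (bmu_part : forall b, is_partition (bmu b)).
Hypotheses (la_part : is_partition la) (mu_part : is_partition mu).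
Hypotheses (bla_la : corresp n s bla la) (bmu_mu : corresp n s bmu mu).

Let sumn_diff := sumn_diff_wsize n_gt0 l_gt0 bla_la bmu_mu la_part mu_part bla_part bmu_part.

Lemma J1_Ncount d d' : J1 bla bmu d d' -> jJ1 n s bla bmu d d' <> 0 ->
  forall r, Ncount n (s d) r (skewd (bla d) (bmu d)) =
            Ncount n (s d') r (skewd (bmu d') (bla d')).
Proof.
case=> _ _ _ [rib rib'] hsize; rewrite /jJ1; case: eqP => // hhead _.
exact: Ncount_ribbon_eq (bla_part d) (bmu_part d) (bmu_part d') (bla_part d') rib rib'
  hsize (or_introl hhead).
Qed.

Lemma J1_sumn d d' : J1 bla bmu d d' ->
  Ncount n (s d) 0 (skewd (bla d) (bmu d)) = Ncount n (s d') 0 (skewd (bmu d') (bla d')) ->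
  sumn la = sumn mu.
Proof.
case=> [[_ /eqP d_neq]] [sub sub'] eq_else _ hsize hN0.
move: sumn_diff; rewrite (bigD1 d) // (bigD1 d') 1?eq_sym //= big1 => [|b /andP[/eqP bd /eqP bd']].
  by rewrite (skewd_nil sub) (skewd_nil sub') !wsize_Ncount hsize hN0 /=; lia.
by rewrite eq_else // subrr.
Qed.

Lemma J2_Ncount d : J2 bla bmu d -> jJ2 n s bla bmu d <> 0 ->
  forall r, Ncount n (s d) r (skewd (bla d) (bmu d)) =
            Ncount n (s d) r (skewd (bmu d) (bla d)).
Proof.
case=> _ _ rib rib' hsize hj.
have hhead : res n (s d) (rhead (skewd (bla d) (bmu d))) =
             res n (s d) (rhead (skewd (bmu d) (bla d))) \/ (n %| size (skewd (bla d) (bmu d)))%N.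
  move: hj; rewrite /jJ2; case: eqP => [|_]; first by left.
  by case: (n %| _)%N => /=; [right | rewrite mulr0].
exact: Ncount_ribbon_eq (bla_part d) (bmu_part d) (bmu_part d) (bla_part d) rib rib' hsize hhead.
Qed.

Lemma J2_sumn d : J2 bla bmu d ->
  Ncount n (s d) 0 (skewd (bla d) (bmu d)) = Ncount n (s d) 0 (skewd (bmu d) (bla d)) ->
  sumn la = sumn mu.
Proof.
case=> _ eq_else _ _ hsize hN0.
move: sumn_diff; rewrite (bigD1 d) //= big1 => [|b /eqP bd].
  by rewrite !wsize_Ncount hsize hN0; lia.
by rewrite eq_else // subrr.
Qed.

End JNonzero.

Close Scope ring_scope.
Unset Implicit Arguments.

Theorem mainTheorem10 (n l m : nat) (s : 'I_l -> int)
  (bla bmu : 'I_l -> seq nat) (la mu : seq nat) :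
  0 < n -> 0 < l -> 0 < m ->
  is_multipartition m bla -> is_multipartition m bmu ->
  is_partition la -> is_partition mu ->
  corresp n s bla la -> corresp n s bmu mu ->
  (forall d d' : 'I_l, J1 bla bmu d d' -> jJ1 n s bla bmu d d' <> 0%R ->
     (forall r : int, Ncount n (s d) r (skewd (bla d) (bmu d)) =
                      Ncount n (s d') r (skewd (bmu d') (bla d'))) /\
     sumn la = sumn mu) /\
  (forall d : 'I_l, J2 bla bmu d -> jJ2 n s bla bmu d <> 0%R ->
     (forall r : int, Ncount n (s d) r (skewd (bla d) (bmu d)) =
                      Ncount n (s d) r (skewd (bmu d) (bla d))) /\
     sumn la = sumn mu).
Proof.
move=> n_gt0 l_gt0 _ [bla_part _] [bmu_part _] la_part mu_part bla_la bmu_mu.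
split=> [d d' hJ hj | d hJ hj].
- have hN := J1_Ncount bla_part bmu_part hJ hj; split=> //.
  exact: (J1_sumn n_gt0 l_gt0 bla_part bmu_part la_part mu_part bla_la bmu_mu hJ (hN 0%R)).
- have hN := J2_Ncount bla_part bmu_part hJ hj; split=> //.
  exact: (J2_sumn n_gt0 l_gt0 bla_part bmu_part la_part mu_part bla_la bmu_mu hJ (hN 0%R)).
Qed.
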